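(* Fix $p\in(0,1)$ and let $D_n$ be the degree of the source of a random series-parallel network of size $n$ generated by the Bernoulli model with parameter $p$. For every $r\ge 1$ and $n\ge1$, $$\mathbb{E}\big(D_n^{\underline r}\big)=r!\sum_{j=0}^{r-1}\binom{r-1}{j}(-1)^{r-1-j}\binom{n+p(j+1)-1}{n-1},$$ where $D_n^{\underline r}=D_n(D_n-1)\cdots(D_n-r+1)$; consequently $\mathbb{E}(D_n^{\underline r})\sim \dfrac{r!\,n^{rp}}{\Gamma(rp+1)}$ as $n\to\infty$. Moreover, the probability generating function satisfies $$\sum_{n\ge1}\sum_{m}\mathbb{P}\{D_n=m\}z^{n-1}v^m=\frac{v}{v(1-z)+(1-v)(1-z)^{1-p}}.$$
   Context: Bernoulli model of series-parallel networks with parameter $p\in(0,1)$, $q=1-p$: at step $1$ the network is a single edge labelled $1$ from the source to the sink. At step $n>1$ one of the $n-1$ existing edges is chosen uniformly at random, say edge $j=(x,y)$; with probability $p$ a new parallel edge $(x,y)$ labelled $n$ is added, and with probability $q$ edge $(x,y)$ is replaced by edges $(x,z)$ labelled $j$ and $(z,y)$ labelled $n$, with $z$ a new vertex. The network after step $n$ has size $n$. The degree of the source is its out-degree. Binomial coefficients with real upper argument: $\binom{a}{k}=a(a-1)\cdots(a-k+1)/k!$. *)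

From Stdlib Require Import Arith Factorial Reals Lra Lia List.
Import ListNotations.
Open Scope R_scope.

(* A series-parallel network: the list of its edges (tail, head); the edge
   labelled k is the (k-1)-th element of the list.  Vertex 0 is the source,
   vertex 1 is the sink; the new vertex created at step n is vertex n (n >= 2),
   so all vertex names are distinct. *)
Definition network := list (nat * nat).

Definition edge_at (G : network) (j : nat) : nat * nat := nth j G (0%nat, 1%nat).

Definition par_step (G : network) (j : nat) : network :=
  let (x, y) := edge_at G j in G ++ [(x, y)].

(* series step: edge j=(x,y) replaced by (x,z) (keeps label j) and (z,y) (new label) *)
Definition ser_step (G : network) (j z : nat) : network :=
  let (x, y) := edge_at G j in firstn j G ++ (x, z) :: skipn (S j) G ++ [(z, y)].

Definition fdist := list (R * network).

(* Distribution of the network after step n (size n) in the Bernoulli model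
   with parameter p.  Step n+1: each of the n existing edges is chosen with
   probability 1/n; parallel with probability p, series with probability 1-p;
   the new vertex is named n+1. *)
Fixpoint sp_dist (p : R) (n : nat) : fdist :=
  match n with
  | O => []  (* size 0 is not defined; irrelevant *)
  | S O => [(1, [(0%nat, 1%nat)])]
  | S m =>
      flat_map (fun wG : R * network =>
        let (w, G) := wG in
        flat_map (fun j =>
          [(w * p / INR m, par_step G j);
           (w * (1 - p) / INR m, ser_step G j (S m))]) (seq 0 m))
        (sp_dist p m)
  end.

Definition src_deg (G : network) : nat :=
  length (filter (fun e => Nat.eqb (fst e) 0%nat) G).

Definition expect (p : R) (n : nat) (f : nat -> R) : R :=
  fold_right (fun wG acc => fst wG * f (src_deg (snd wG)) + acc) 0 (sp_dist p n).

Definition prob_deg (p : R) (n m : nat) : R :=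
  expect p n (fun d => if Nat.eqb d m then 1 else 0).

Fixpoint falling (x : R) (r : nat) : R :=
  match r with
  | O => 1
  | S k => falling x k * (x - INR k)
  end.

Definition binomR (a : R) (k : nat) : R := falling a k / INR (fact k).

(* Gauss/Euler limit characterisation of the Gamma function, x > 0:
   Gamma(x) = lim_n n! n^x / (x (x+1) ... (x+n)).  (Stdlib has no Gamma.) *)
Definition is_Gamma (x g : R) : Prop :=
  Un_cv (fun n => INR (fact n) * Rpower (INR n) x / falling (x + INR n) (S n)) g.

(* Given the network after step n, the next step raises the source degree by
   one exactly when an edge leaving the source is chosen (probability D_n/n)
   and duplicated in parallel (probability p), and leaves it unchanged
   otherwise.  Hence E f(D_(n+1)) = E [f(D_n) + p D_n/n (f(D_n + 1) - f(D_n))].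
   For falling factorials and for point masses this gives linear recurrences
   in n, which are also satisfied by alternating sums of the numbers
   binom(n + c(j+1) - 1, n - 1); induction on n identifies the factorial
   moments and the probabilities P{D_n = m+1} with such sums.  The term
   j = r - 1 dominates and Euler's limit for Gamma gives the asymptotics.
   Finally binom(k + s - 1, k) is the coefficient of z^k in (1 - z)^(-s), so
   summing the explicit probabilities first over n (legitimate for a
   nonnegative double series) leaves a geometric series in v (1 - (1 - z)^p). *)

From Stdlib Require Import Arith Factorial Reals Lra Lia List.
From Coquelicot Require Import Rcomplements Rbar Hierarchy Lim_seq Series PSeries.
From Coquelicot Require Import Continuity Derive AutoDerive.
Import ListNotations.
Open Scope R_scope.

(** * One step of the Bernoulli model *)

Definition fexpect (L : fdist) (f : nat -> R) : R :=
  fold_right (fun wG acc => fst wG * f (src_deg (snd wG)) + acc) 0 L.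

Lemma fexpect_app L1 L2 f : fexpect (L1 ++ L2) f = fexpect L1 f + fexpect L2 f.
Proof. induction L1 as [|wG L1 IH]; simpl; [lra | rewrite IH; lra]. Qed.

Lemma fexpect_eq_in L f g :
  (forall wG, In wG L -> f (src_deg (snd wG)) = g (src_deg (snd wG))) ->
  fexpect L f = fexpect L g.
Proof.
  induction L as [|wG L IH]; intros H; simpl; [reflexivity|].
  rewrite H by (left; reflexivity).
  rewrite IH by (intros wG' HwG'; apply H; right; exact HwG'). reflexivity.
Qed.

Lemma fexpect_nonneg L f :
  (forall wG, In wG L -> 0 <= fst wG) -> (forall d, 0 <= f d) -> 0 <= fexpect L f.
Proof.
  induction L as [|wG L IH]; intros Hw Hf; simpl; [lra|].
  assert (0 <= fst wG * f (src_deg (snd wG))) by (apply Rmult_le_pos; [apply Hw; left|]; auto).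
  assert (0 <= fexpect L f) by (apply IH; auto; intros wG' HwG'; apply Hw; right; exact HwG').
  lra.
Qed.

Lemma src_deg_app G1 G2 : src_deg (G1 ++ G2) = (src_deg G1 + src_deg G2)%nat.
Proof. unfold src_deg; rewrite filter_app, length_app; reflexivity. Qed.

Lemma src_deg_le_length G : (src_deg G <= length G)%nat.
Proof. apply filter_length_le. Qed.

Definition source_edge (G : network) (j : nat) : nat :=
  if Nat.eqb (fst (edge_at G j)) 0 then 1 else 0.

Lemma src_deg_par_step G j : src_deg (par_step G j) = (src_deg G + source_edge G j)%nat.
Proof.
  unfold par_step, source_edge; destruct (edge_at G j) as [x y].
  rewrite src_deg_app; unfold src_deg at 2; simpl.
  destruct (Nat.eqb x 0); reflexivity.
Qed.

Lemma src_deg_ser_step G j z :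
  (j < length G)%nat -> z <> 0%nat -> src_deg (ser_step G j z) = src_deg G.
Proof.
  intros Hj Hz; unfold ser_step, edge_at.
  pose proof (firstn_skipn_middle j G (nth_error_nth' G (0%nat, 1%nat) Hj)) as HG.
  destruct (nth j G (0%nat, 1%nat)) as [x y].
  rewrite <- HG at 3.
  rewrite !src_deg_app; unfold src_deg; cbn [filter fst].
  rewrite filter_app; cbn [filter fst].
  destruct (Nat.eqb_spec z 0); [contradiction|].
  destruct (Nat.eqb x 0); rewrite ?app_nil_r; reflexivity.
Qed.

Lemma length_par_step G j : length (par_step G j) = S (length G).
Proof. unfold par_step; destruct (edge_at G j); rewrite length_app; simpl; lia. Qed.

Lemma length_ser_step G j z : (j < length G)%nat -> length (ser_step G j z) = S (length G).
Proof.
  intros Hj; unfold ser_step; destruct (edge_at G j).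
  rewrite length_app; cbn [length]; rewrite length_app, length_firstn; cbn [length].
  rewrite length_skipn; lia.
Qed.

Lemma source_edges_count G :
  list_sum (map (source_edge G) (seq 0 (length G))) = src_deg G.
Proof.
  induction G as [|e G IH]; [reflexivity|].
  cbn [length seq map list_sum]; rewrite <- seq_shift, map_map.
  change (fun j => source_edge (e :: G) (S j)) with (source_edge G).
  cbn [list_sum fold_right]; fold (list_sum (map (source_edge G) (seq 0 (length G)))).
  rewrite IH; unfold source_edge, src_deg, edge_at; simpl.
  destruct (Nat.eqb (fst e) 0); reflexivity.
Qed.

(* Only a parallel split of an edge leaving the source raises the source degree. *)
Lemma fexpect_splits G w p x z f (L : list nat) :
  z <> 0%nat -> (forall j, In j L -> (j < length G)%nat) ->
  fexpect (flat_map (fun j => [(w * p / x, par_step G j);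
                               (w * (1 - p) / x, ser_step G j z)]) L) f
  = w / x * (INR (length L) * f (src_deg G)
             + p * INR (list_sum (map (source_edge G) L))
                 * (f (S (src_deg G)) - f (src_deg G))).
Proof.
  intros Hz; induction L as [|j L IH]; intros HL; [simpl; lra|].
  cbn [flat_map]; rewrite fexpect_app, IH by (intros i Hi; apply HL; right; exact Hi).
  cbn [fexpect fold_right fst snd length map].
  rewrite src_deg_par_step, src_deg_ser_step by (auto; apply HL; left; auto).
  change (list_sum (source_edge G j :: map (source_edge G) L))
    with (source_edge G j + list_sum (map (source_edge G) L))%nat.
  rewrite S_INR, plus_INR; unfold source_edge.
  destruct (Nat.eqb _ 0); rewrite ?Nat.add_1_r, ?Nat.add_0_r, ?S_INR; simpl; unfold Rdiv; ring.
Qed.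

Lemma sp_dist_support p n : 0 <= p <= 1 -> (1 <= n)%nat ->
  forall wG, In wG (sp_dist p n) -> length (snd wG) = n /\ 0 <= fst wG.
Proof.
  intros Hp Hn; induction n as [|[|k] IH]; [lia| |].
  - intros wG [<-|[]]; split; simpl; [reflexivity | lra].
  - intros wG HwG; unfold sp_dist in HwG; fold (sp_dist p (S k)) in HwG.
    apply in_flat_map in HwG as [[w G] [HG HwG]].
    destruct (IH ltac:(lia) (w, G) HG) as [HL Hw]; simpl in HL, Hw.
    apply in_flat_map in HwG as [j [Hj HwG]]; apply in_seq in Hj.
    assert (0 < INR (S k)) by (apply lt_0_INR; lia).
    assert (0 <= w * p / INR (S k) /\ 0 <= w * (1 - p) / INR (S k)) as [Hpar Hser]
      by (split; apply Rdiv_le_0_compat; nra).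
    destruct HwG as [<-|[<-|[]]]; simpl; split; auto.
    + rewrite length_par_step; lia.
    + rewrite length_ser_step; lia.
Qed.

Lemma expect_S p k f : 0 <= p <= 1 ->
  expect p (S (S k)) f
  = expect p (S k) (fun d => f d + p * INR d / INR (S k) * (f (S d) - f d)).
Proof.
  intros Hp; unfold expect; fold (fexpect (sp_dist p (S (S k))) f).
  unfold sp_dist at 1; fold (sp_dist p (S k)).
  assert (HSk : INR (S k) <> 0) by (apply not_0_INR; lia).
  pose proof (sp_dist_support p (S k) Hp ltac:(lia)) as Hsupp.
  revert Hsupp; induction (sp_dist p (S k)) as [|[w G] L IH]; intros Hsupp; [reflexivity|].
  cbn [flat_map fold_right fst snd]; rewrite fexpect_app.
  rewrite IH by (intros wG HwG; apply Hsupp; right; exact HwG).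
  destruct (Hsupp (w, G) (or_introl eq_refl)) as [HL _]; simpl in HL.
  rewrite <- HL, fexpect_splits, length_seq, source_edges_count by
    (lia || (intros j Hj; apply in_seq in Hj; lia)).
  rewrite HL; field; exact HSk.
Qed.

Lemma expect_1 p f : expect p 1 f = f 1%nat.
Proof. unfold expect, src_deg; simpl; ring. Qed.

Lemma expect_linear p n a b f g :
  expect p n (fun d => a * f d + b * g d) = a * expect p n f + b * expect p n g.
Proof. unfold expect; induction (sp_dist p n) as [|wG L IH]; simpl; [ring | rewrite IH; ring]. Qed.

Lemma expect_ext p n f g : (forall d, f d = g d) -> expect p n f = expect p n g.
Proof. intros H; apply fexpect_eq_in; intros; apply H. Qed.

Lemma expect_eq_le p n f g : 0 <= p <= 1 -> (1 <= n)%nat ->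
  (forall d, (d <= n)%nat -> f d = g d) -> expect p n f = expect p n g.
Proof.
  intros Hp Hn Hfg; apply fexpect_eq_in; intros wG HwG.
  destruct (sp_dist_support p n Hp Hn wG HwG) as [HL _].
  apply Hfg; rewrite <- HL; apply src_deg_le_length.
Qed.

(** * Exact factorial moments and probabilities *)

Lemma falling_S_l x k : falling x (S k) = x * falling (x - 1) k.
Proof.
  induction k as [|k IH]; simpl; [ring|].
  simpl in IH; rewrite IH; destruct k; simpl; ring.
Qed.

Lemma falling_INR_lt d r : (d < r)%nat -> falling (INR d) r = 0.
Proof.
  induction r as [|r IH]; intros H; [lia|]; simpl.
  destruct (Nat.eq_dec d r) as [->|Hne]; [ring | rewrite IH by lia; ring].
Qed.

Lemma falling_forward_diff x k :
  falling (x + 1) (S k) - falling x (S k) = INR (S k) * falling x k.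
Proof.
  induction k as [|k IH]; [simpl; ring|].
  change (falling (x + 1) (S (S k))) with (falling (x + 1) (S k) * (x + 1 - INR (S k))).
  change (falling x (S (S k))) with (falling x (S k) * (x - INR (S k))).
  replace (falling (x + 1) (S k)) with (falling x (S k) + INR (S k) * falling x k) by lra.
  change (falling x (S k)) with (falling x k * (x - INR k)); rewrite !S_INR; ring.
Qed.

(* [negbin s k] is the coefficient of [z^k] in [(1 - z)^(-s)]. *)
Definition negbin (s : R) (k : nat) : R := binomR (INR k + s - 1) k.

Lemma negbin_0 s : negbin s 0 = 1.
Proof. unfold negbin, binomR; simpl; field. Qed.

Lemma negbin_S s k : negbin s (S k) = negbin s k * (INR k + s) / INR (S k).
Proof.
  unfold negbin, binomR; rewrite falling_S_l, fact_simpl, mult_INR.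
  replace (INR (S k) + s - 1) with (INR k + s) by (rewrite S_INR; ring).
  pose proof (INR_fact_lt_0 k); assert (0 < INR (S k)) by (apply lt_0_INR; lia).
  field; lra.
Qed.

Lemma binom_mul_sub u j : (j <= u)%nat ->
  C (S u) j * (INR (S u) - INR j) = INR (S u) * C u j.
Proof.
  intros H; unfold C; replace (S u - j)%nat with (S (u - j)) by lia.
  rewrite !fact_simpl, !mult_INR.
  replace (INR (S u) - INR j) with (INR (S (u - j))) by (rewrite !S_INR, minus_INR by lia; ring).
  pose proof (INR_fact_lt_0 j); pose proof (INR_fact_lt_0 (u - j)).
  assert (0 < INR (S (u - j))) by (apply lt_0_INR; lia).
  field; lra.
Qed.

Lemma sum_binom_mul_sub (b : nat -> R) u :
  sum_f_R0 (fun j => C (S u) j * (INR (S u) - INR j) * b j) (S u)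
  = INR (S u) * sum_f_R0 (fun j => C u j * b j) u.
Proof.
  rewrite tech5, Rminus_diag, Rmult_0_r, Rmult_0_l, Rplus_0_r, scal_sum.
  apply sum_eq; intros j Hj; rewrite binom_mul_sub by exact Hj; ring.
Qed.

Definition alt_binom_sum (c : R) (u k : nat) : R :=
  sum_f_R0 (fun j => C u j * (-1) ^ (u - j) * negbin (1 + c * INR (S j)) k) u.

Lemma alt_binom_sum_0 c u : alt_binom_sum c u 0 = if Nat.eqb u 0 then 1 else 0.
Proof.
  unfold alt_binom_sum.
  rewrite (sum_eq _ (fun j => C u j * 1 ^ j * (-1) ^ (u - j)))
    by (intros j _; rewrite negbin_0, pow1; ring).
  rewrite <- binomial, Rplus_opp_r; destruct u; simpl; ring.
Qed.

Lemma alt_binom_sum_S c u k :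
  alt_binom_sum c u (S k)
  = (1 + c * INR (S u) / INR (S k)) * alt_binom_sum c u k
    + c * INR u / INR (S k) * alt_binom_sum c (pred u) k.
Proof.
  assert (Hk : INR (S k) <> 0) by (apply not_0_INR; lia).
  destruct u as [|u].
  { unfold alt_binom_sum; cbn [sum_f_R0 pred Nat.sub pow]; rewrite negbin_S.
    replace (INR k) with (INR (S k) - 1) by (rewrite S_INR; ring).
    change (INR 1) with 1; change (INR 0) with 0; field; exact Hk. }
  unfold alt_binom_sum; simpl pred.
  set (b := fun j => (-1) ^ (S u - j) * negbin (1 + c * INR (S j)) k).
  (* Write [c (j + 1)] as [c (u + 2) - c (u + 1 - j)]; the second part is
     absorbed by [sum_binom_mul_sub]. *)
  rewrite (sum_eq _ (fun j => C (S u) j * (-1) ^ (S u - j) * negbin (1 + c * INR (S j)) k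
                                * (1 + c * INR (S (S u)) / INR (S k))
                              - C (S u) j * (INR (S u) - INR j) * b j * (c / INR (S k)))).
  2:{ intros j _; unfold b; rewrite negbin_S, !S_INR; field; rewrite <- S_INR; exact Hk. }
  rewrite minus_sum, <- !scal_sum, sum_binom_mul_sub.
  rewrite (sum_eq (fun j => C u j * b j)
                  (fun j => C u j * (-1) ^ (u - j) * negbin (1 + c * INR (S j)) k * (-1))).
  2:{ intros j Hj; unfold b; replace (S u - j)%nat with (S (u - j)) by lia; simpl; ring. }
  rewrite <- scal_sum.
  field; exact Hk.
Qed.

Definition factorial_moment (p : R) (n r : nat) : R :=
  expect p n (fun d => falling (INR d) r).

Lemma factorial_moment_S p k u : 0 <= p <= 1 ->
  factorial_moment p (S (S k)) (S u)
  = (1 + p * INR (S u) / INR (S k)) * factorial_moment p (S k) (S u)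
    + p * INR (S u) * INR u / INR (S k) * factorial_moment p (S k) u.
Proof.
  intros Hp; unfold factorial_moment; rewrite expect_S by exact Hp.
  rewrite <- expect_linear; apply expect_ext; intros d.
  rewrite (S_INR d), falling_forward_diff.
  change (falling (INR d) (S u)) with (falling (INR d) u * (INR d - INR u)).
  assert (INR (S k) <> 0) by (apply not_0_INR; lia).
  field; assumption.
Qed.

Lemma factorial_moment_formula p k u : 0 <= p <= 1 ->
  factorial_moment p (S k) (S u) = INR (fact (S u)) * alt_binom_sum p u k.
Proof.
  intros Hp; revert u; induction k as [|k IH]; intros u.
  - unfold factorial_moment; rewrite expect_1, alt_binom_sum_0.
    destruct u as [|u]; [simpl; ring|].
    rewrite falling_INR_lt by lia; simpl; ring.
  - rewrite factorial_moment_S, alt_binom_sum_S, IH by exact Hp.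
    destruct u as [|u]; [change (INR 0) with 0; unfold Rdiv; ring|].
    rewrite IH, (fact_simpl (S u)), !mult_INR; simpl pred; unfold Rdiv; ring.
Qed.

Lemma prob_deg_S p k m : 0 <= p <= 1 ->
  prob_deg p (S (S k)) (S m)
  = (1 - p * INR (S m) / INR (S k)) * prob_deg p (S k) (S m)
    + p * INR m / INR (S k) * prob_deg p (S k) m.
Proof.
  intros Hp; unfold prob_deg; rewrite expect_S by exact Hp.
  rewrite <- expect_linear; apply expect_ext; intros d.
  assert (INR (S k) <> 0) by (apply not_0_INR; lia).
  destruct (Nat.eqb_spec d (S m)) as [->|H1].
  - rewrite (proj2 (Nat.eqb_neq (S (S m)) (S m))), (proj2 (Nat.eqb_neq (S m) m)) by lia.
    field; assumption.
  - destruct (Nat.eqb_spec d m) as [->|H2].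
    + rewrite Nat.eqb_refl; field; assumption.
    + rewrite (proj2 (Nat.eqb_neq (S d) (S m))) by lia.
      field; assumption.
Qed.

Lemma prob_deg_formula p k m : 0 <= p <= 1 ->
  prob_deg p (S k) (S m) = (-1) ^ m * alt_binom_sum (- p) m k.
Proof.
  intros Hp; revert m; induction k as [|k IH]; intros m.
  - unfold prob_deg; rewrite expect_1, alt_binom_sum_0.
    destruct m; simpl; ring.
  - rewrite prob_deg_S, alt_binom_sum_S, IH by exact Hp.
    destruct m as [|m]; [change (INR 0) with 0; unfold Rdiv; ring|].
    rewrite IH; simpl pred; simpl pow; unfold Rdiv; ring.
Qed.

Lemma binomR_negbin a k : binomR (INR (S k) + a - 1) (S k - 1) = negbin (1 + a) k.
Proof.
  unfold negbin; replace (S k - 1)%nat with k by lia.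
  f_equal; rewrite S_INR; ring.
Qed.

Lemma prob_deg_0 p n : 0 <= p <= 1 -> (1 <= n)%nat -> prob_deg p n 0 = 0.
Proof.
  intros Hp Hn; destruct n as [|k]; [lia|]; clear Hn.
  induction k as [|k IH]; unfold prob_deg in *; [rewrite expect_1; reflexivity|].
  rewrite expect_S by exact Hp.
  transitivity (expect p (S k) (fun d => if Nat.eqb d 0 then 1 else 0)); [|exact IH].
  apply expect_ext; intros [|d]; simpl; unfold Rdiv; ring.
Qed.

Lemma prob_deg_nonneg p n m : 0 <= p <= 1 -> (1 <= n)%nat -> 0 <= prob_deg p n m.
Proof.
  intros Hp Hn; apply fexpect_nonneg.
  - intros wG HwG; apply (sp_dist_support p n Hp Hn wG HwG).
  - intros d; destruct (Nat.eqb d m); lra.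
Qed.

Lemma prob_deg_gt p n m : 0 <= p <= 1 -> (1 <= n)%nat -> (n < m)%nat -> prob_deg p n m = 0.
Proof.
  intros Hp Hn Hm; unfold prob_deg.
  rewrite (expect_eq_le p n _ (fun _ => 0 * 1 + 0 * 1)) by
    (auto; intros d Hd; rewrite (proj2 (Nat.eqb_neq d m)) by lia; ring).
  rewrite expect_linear; ring.
Qed.

(** * Euler's limit for the Gamma function *)

Lemma exp_le_mono x y : x <= y -> exp x <= exp y.
Proof.
  intros [Hlt | ->]; [left; apply exp_increasing; exact Hlt | right; reflexivity].
Qed.

Lemma ln_le_sub_1 y : 0 < y -> ln y <= y - 1.
Proof. intros Hy; pose proof (exp_ineq1_le (ln y)) as H; rewrite exp_ln in H by exact Hy; lra. Qed.

Lemma ln_succ_bounds n : (1 <= n)%nat ->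
  1 / INR (S n) <= ln (INR (S n)) - ln (INR n) <= 1 / INR n.
Proof.
  intros Hn; assert (h0 : 0 < INR n) by (apply lt_0_INR; lia).
  rewrite S_INR; split.
  - pose proof (ln_le_sub_1 (INR n / (INR n + 1)) ltac:(apply Rdiv_lt_0_compat; lra)) as H.
    rewrite ln_div in H by lra.
    replace (INR n / (INR n + 1) - 1) with (- (1 / (INR n + 1))) in H by (field; lra); lra.
  - pose proof (ln_le_sub_1 ((INR n + 1) / INR n) ltac:(apply Rdiv_lt_0_compat; lra)) as H.
    rewrite ln_div in H by lra.
    replace ((INR n + 1) / INR n - 1) with (1 / INR n) in H by (field; lra); lra.
Qed.

Definition gamma_seq (x : R) (n : nat) : R :=
  INR (fact n) * Rpower (INR n) x / falling (x + INR n) (S n).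

Definition gamma_ratio (x : R) (n : nat) : R :=
  INR (S n) / (x + INR (S n)) * exp (x * (ln (INR (S n)) - ln (INR n))).

Lemma falling_shift_pos x n : 0 < x -> 0 < falling (x + INR n) (S n).
Proof.
  intros Hx; induction n as [|n IH]; [simpl; lra|].
  rewrite falling_S_l; replace (x + INR (S n) - 1) with (x + INR n) by (rewrite S_INR; ring).
  apply Rmult_lt_0_compat; [pose proof (pos_INR (S n)); lra | exact IH].
Qed.

Lemma gamma_seq_pos x n : 0 < x -> 0 < gamma_seq x n.
Proof.
  intros Hx; unfold gamma_seq; apply Rdiv_lt_0_compat; [|apply falling_shift_pos; exact Hx].
  apply Rmult_lt_0_compat; [apply INR_fact_lt_0 | apply exp_pos].
Qed.

Lemma gamma_seq_S x n : 0 < x -> (1 <= n)%nat ->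
  gamma_seq x (S n) = gamma_seq x n * gamma_ratio x n.
Proof.
  intros Hx Hn; unfold gamma_seq, gamma_ratio.
  rewrite fact_simpl, mult_INR, (falling_S_l (x + INR (S n))).
  replace (x + INR (S n) - 1) with (x + INR n) by (rewrite S_INR; ring).
  unfold Rpower.
  replace (x * ln (INR (S n))) with (x * ln (INR n) + x * (ln (INR (S n)) - ln (INR n))) by ring.
  rewrite exp_plus; pose proof (falling_shift_pos x n Hx); pose proof (pos_INR (S n)).
  field; lra.
Qed.

Lemma gamma_ratio_ge_1 x n : 0 < x -> (1 <= n)%nat -> 1 <= gamma_ratio x n.
Proof.
  intros Hx Hn; unfold gamma_ratio.
  destruct (ln_succ_bounds n Hn) as [Hlow _].
  assert (h0 : 0 < INR (S n)) by (apply lt_0_INR; lia).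
  apply Rle_trans with (INR (S n) / (x + INR (S n)) * (1 + x * (1 / INR (S n)))).
  - right; field; lra.
  - apply Rmult_le_compat_l; [left; apply Rdiv_lt_0_compat; lra|].
    eapply Rle_trans, exp_ineq1_le; apply Rplus_le_compat_l, Rmult_le_compat_l; lra.
Qed.

(* From [m/(x+m) <= exp (-x/(x+m))] with [m = n+1] and the upper bound on [ln]. *)
Lemma gamma_ratio_le x n : 0 < x -> (1 <= n)%nat ->
  gamma_ratio x n <= exp (x * (1 + x) * (1 / INR n - 1 / INR (S n))).
Proof.
  intros Hx Hn; unfold gamma_ratio.
  destruct (ln_succ_bounds n Hn) as [_ Hup].
  assert (h0 : 0 < INR n) by (apply lt_0_INR; lia).
  rewrite S_INR in *.
  apply Rle_trans with (exp (- x / (x + (INR n + 1))) * exp (x * (1 / INR n))).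
  - apply Rmult_le_compat; [left; apply Rdiv_lt_0_compat; lra | left; apply exp_pos | |].
    + eapply Rle_trans, exp_ineq1_le; right; field; lra.
    + apply exp_le_mono, Rmult_le_compat_l; lra.
  - rewrite <- exp_plus; apply exp_le_mono.
    apply Rle_trans with (x * (1 + x) / (INR n * (x + INR n + 1))); [right; field; lra|].
    replace (x * (1 + x) * (1 / INR n - 1 / (INR n + 1)))
      with (x * (1 + x) / (INR n * (INR n + 1))) by (field; lra).
    unfold Rdiv; apply Rmult_le_compat_l; [nra|]; apply Rinv_le_contravar; nra.
Qed.

Lemma gamma_seq_bounded x n : 0 < x -> (1 <= n)%nat ->
  gamma_seq x n * exp (x * (1 + x) * (1 / INR n)) <= gamma_seq x 1 * exp (x * (1 + x)).
Proof.
  intros Hx Hn; induction n as [|[|n] IH]; [lia | right; simpl; f_equal; f_equal; field|].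
  eapply Rle_trans; [|apply IH; lia].
  rewrite gamma_seq_S by (auto; lia).
  set (K := x * (1 + x)).
  pose proof (gamma_ratio_le x (S n) Hx ltac:(lia)) as Hr; fold K in Hr.
  pose proof (gamma_seq_pos x (S n) Hx).
  apply Rle_trans with (gamma_seq x (S n) * exp (K * (1 / INR (S n) - 1 / INR (S (S n))))
                        * exp (K * (1 / INR (S (S n))))).
  - apply Rmult_le_compat_r; [left; apply exp_pos|].
    apply Rmult_le_compat_l; [lra | exact Hr].
  - right; rewrite Rmult_assoc, <- exp_plus; f_equal; f_equal; ring.
Qed.

Lemma is_Gamma_exists x : 0 < x -> exists g, 0 < g /\ is_Gamma x g.
Proof.
  intros Hx; set (u := fun k => gamma_seq x (S k)).
  assert (Hgrow : Un_growing u).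
  { intros k; unfold u; rewrite (gamma_seq_S x (S k)) by (auto; lia).
    pose proof (gamma_ratio_ge_1 x (S k) Hx ltac:(lia)); pose proof (gamma_seq_pos x (S k) Hx).
    nra. }
  assert (Hub : has_ub u).
  { exists (gamma_seq x 1 * exp (x * (1 + x))); intros y [i ->]; unfold u.
    pose proof (gamma_seq_bounded x (S i) Hx ltac:(lia)); pose proof (gamma_seq_pos x (S i) Hx).
    assert (1 <= exp (x * (1 + x) * (1 / INR (S i)))).
    { eapply Rle_trans, exp_ineq1_le.
      assert (0 < INR (S i)) by (apply lt_0_INR; lia).
      assert (0 <= x * (1 + x) * (1 / INR (S i)))
        by (apply Rmult_le_pos; [nra | left; apply Rdiv_lt_0_compat; lra]).
      lra. }
    nra. }
  destruct (growing_cv u Hgrow Hub) as [g Hg]; exists g; split.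
  - pose proof (growing_ineq u g Hgrow Hg 0); pose proof (gamma_seq_pos x 1 Hx); unfold u in *; lra.
  - apply is_lim_seq_Reals, (is_lim_seq_incr_1 (gamma_seq x)), is_lim_seq_Reals; exact Hg.
Qed.

(** * Asymptotics of the factorial moments *)

Lemma is_lim_seq_sum_f_R0 (F : nat -> nat -> R) (L : nat -> R) N :
  (forall j, (j <= N)%nat -> is_lim_seq (F j) (L j)) ->
  is_lim_seq (fun k => sum_f_R0 (fun j => F j k) N) (sum_f_R0 L N).
Proof.
  induction N as [|N IH]; intros H; simpl; [apply H; lia|].
  apply (is_lim_seq_plus' _ _ (sum_f_R0 L N) (L (S N))); [apply IH; intros; apply H|apply H]; lia.
Qed.

Lemma is_lim_seq_INR_ratio a c : 0 < c -> is_lim_seq (fun k => (INR k + a) / (INR k + c)) 1.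
Proof.
  intros Hc.
  assert (Hinv : is_lim_seq (fun k => / (INR k + c)) 0).
  { replace (Finite 0) with (Rbar_inv p_infty) by reflexivity.
    apply is_lim_seq_inv; [|discriminate].
    apply is_lim_seq_le_p_loc with INR; [exists 0%nat; intros; lra | apply is_lim_seq_INR]. }
  pose proof (is_lim_seq_plus' _ _ 1 ((a - c) * 0) (is_lim_seq_const 1)
               (is_lim_seq_mult' _ _ (a - c) 0 (is_lim_seq_const (a - c)) Hinv)) as H.
  replace (1 + (a - c) * 0) with 1 in H by ring.
  eapply is_lim_seq_ext; [|exact H]; intros k; simpl; pose proof (pos_INR k); field; lra.
Qed.

Lemma is_lim_seq_Rpower_neg c : 0 < c -> is_lim_seq (fun k => Rpower (INR (S k)) (- c)) 0.
Proof.
  intros Hc.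
  assert (Hln : is_lim_seq (fun k => ln (INR (S k)) * c) p_infty).
  { apply (is_lim_seq_mult _ _ p_infty c); [|apply is_lim_seq_const|].
    - apply (is_lim_comp_seq ln (fun k => INR (S k)) p_infty p_infty ElemFct.is_lim_ln_p);
        [exists 0%nat; intros; discriminate | apply (is_lim_seq_incr_1 INR), is_lim_seq_INR].
    - apply is_Rbar_mult_p_infty_pos; simpl; lra. }
  apply is_lim_seq_opp in Hln; change (Rbar_opp p_infty) with m_infty in Hln.
  eapply is_lim_seq_ext;
    [|apply (is_lim_comp_seq exp (fun k => - (ln (INR (S k)) * c)) m_infty 0 ElemFct.is_lim_exp_m);
      [exists 0%nat; intros; discriminate | exact Hln]].
  intros k; unfold Rpower; f_equal; ring.
Qed.

Lemma negbin_gamma_seq a k : 0 < a -> (1 <= k)%nat ->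
  negbin (1 + a) k / Rpower (INR (S k)) a
  = INR k / (INR k + (a + 1)) / gamma_seq (a + 1) k * Rpower (INR k / INR (S k)) a.
Proof.
  intros Ha Hk; assert (h0 : 0 < INR k) by (apply lt_0_INR; lia).
  assert (h1 : 0 < INR (S k)) by (apply lt_0_INR; lia).
  pose proof (falling_shift_pos (a + 1) k ltac:(lra)) as HF.
  unfold negbin, binomR, gamma_seq; rewrite falling_S_l in *.
  replace (INR k + (1 + a) - 1) with (a + 1 + INR k - 1) by ring.
  assert (0 < falling (a + 1 + INR k - 1) k) by (apply (Rmult_lt_reg_l (a + 1 + INR k)); lra).
  rewrite Rpower_plus, Rpower_1 by exact h0.
  unfold Rpower; rewrite ln_div by lra.
  replace (a * (ln (INR k) - ln (INR (S k))))
    with (a * ln (INR k) + - (a * ln (INR (S k)))) by ring.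
  rewrite exp_plus, exp_Ropp.
  pose proof (INR_fact_lt_0 k); pose proof (exp_pos (a * ln (INR k))).
  pose proof (exp_pos (a * ln (INR (S k)))).
  field; repeat split; lra.
Qed.

Lemma negbin_asymptotic a g : 0 < a -> 0 < g -> is_Gamma (a + 1) g ->
  is_lim_seq (fun k => negbin (1 + a) k / Rpower (INR (S k)) a) (/ g).
Proof.
  intros Ha Hg HG.
  assert (Hfrac : is_lim_seq (fun k => INR k / INR (S k)) 1).
  { eapply is_lim_seq_ext; [|apply (is_lim_seq_INR_ratio 0 1); lra].
    intros k; rewrite S_INR; simpl; field; pose proof (pos_INR k); lra. }
  assert (Hpow : is_lim_seq (fun k => Rpower (INR k / INR (S k)) a) 1).
  { replace (Finite 1) with (Finite (Rpower 1 a))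
      by (unfold Rpower; rewrite ln_1, Rmult_0_r, exp_0; reflexivity).
    apply (is_lim_seq_continuous (fun y => Rpower y a)); [|exact Hfrac].
    apply continuity_pt_filterlim, (ex_derive_continuous (fun y => Rpower y a)).
    unfold Rpower; auto_derive; lra. }
  assert (Hinv : is_lim_seq (fun k => / gamma_seq (a + 1) k) (/ g)).
  { apply (is_lim_seq_inv _ (Finite g));
      [apply is_lim_seq_Reals; exact HG | intros H; injection H; lra]. }
  apply is_lim_seq_ext_loc with
    (fun k => INR k / (INR k + (a + 1)) / gamma_seq (a + 1) k * Rpower (INR k / INR (S k)) a).
  { exists 1%nat; intros k Hk; symmetry; apply negbin_gamma_seq; [exact Ha | exact Hk]. }
  replace (/ g) with (1 * / g * 1) by ring.
  apply is_lim_seq_mult'; [apply is_lim_seq_mult'|exact Hpow].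
  - eapply is_lim_seq_ext; [|apply (is_lim_seq_INR_ratio 0 (a + 1)); lra].
    intros k; simpl; rewrite Rplus_0_r; reflexivity.
  - exact Hinv.
Qed.

Lemma negbin_negligible b a : 0 < b < a ->
  is_lim_seq (fun k => negbin (1 + b) k / Rpower (INR (S k)) a) 0.
Proof.
  intros Hb; destruct (is_Gamma_exists (b + 1) ltac:(lra)) as [g [Hg HG]].
  replace (Finite 0) with (Finite (/ g * 0)) by (f_equal; ring).
  eapply is_lim_seq_ext;
    [|apply (is_lim_seq_mult' _ _ (/ g) 0 (negbin_asymptotic b g ltac:(lra) Hg HG)
                              (is_lim_seq_Rpower_neg (a - b) ltac:(lra)))].
  intros k; unfold Rpower.
  replace (a * ln (INR (S k))) with (b * ln (INR (S k)) + - (- (a - b) * ln (INR (S k)))) by ring.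
  rewrite exp_plus, exp_Ropp.
  pose proof (exp_pos (b * ln (INR (S k)))); pose proof (exp_pos (- (a - b) * ln (INR (S k)))).
  field; split; lra.
Qed.

Lemma sum_f_R0_indicator_last u : sum_f_R0 (fun j => if Nat.eqb j u then 1 else 0) u = 1.
Proof.
  destruct u as [|u]; [reflexivity|]; rewrite tech5, Nat.eqb_refl.
  rewrite (sum_eq _ (fun _ => 0))
    by (intros j Hj; rewrite (proj2 (Nat.eqb_neq j (S u))) by lia; reflexivity).
  rewrite sum_cte; ring.
Qed.

Lemma factorial_moment_asymptotic p u g :
  0 < p <= 1 -> 0 < g -> is_Gamma (INR (S u) * p + 1) g ->
  is_lim_seq (fun k => factorial_moment p (S k) (S u)
                       / (INR (fact (S u)) * Rpower (INR (S k)) (INR (S u) * p) / g)) 1.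
Proof.
  intros Hp Hg HG; set (a := INR (S u) * p) in *.
  apply is_lim_seq_ext with
    (fun k => sum_f_R0 (fun j => C u j * (-1) ^ (u - j) * g
                                 * (negbin (1 + p * INR (S j)) k / Rpower (INR (S k)) a)) u).
  { intros k; rewrite factorial_moment_formula by lra.
    pose proof (INR_fact_lt_0 (S u)); assert (0 < Rpower (INR (S k)) a) by apply exp_pos.
    transitivity (g / Rpower (INR (S k)) a * alt_binom_sum p u k); [|field; split; lra].
    unfold alt_binom_sum; rewrite scal_sum; apply sum_eq; intros j _; field; lra. }
  replace (Finite 1) with (Finite (sum_f_R0 (fun j => if Nat.eqb j u then 1 else 0) u))
    by (rewrite sum_f_R0_indicator_last; reflexivity).
  apply is_lim_seq_sum_f_R0; intros j Hj.
  destruct (Nat.eqb_spec j u) as [->|Hne].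
  - replace (Finite 1) with (Rbar_mult (C u u * (-1) ^ (u - u) * g) (/ g)).
    + apply is_lim_seq_scal_l; replace (p * INR (S u)) with a by (unfold a; ring).
      apply negbin_asymptotic; [|exact Hg|exact HG].
      apply Rmult_lt_0_compat; [apply lt_0_INR; lia | lra].
    + unfold C; rewrite Nat.sub_diag; simpl; f_equal.
      pose proof (INR_fact_lt_0 u); field; lra.
  - replace (Finite 0) with (Rbar_mult (C u j * (-1) ^ (u - j) * g) 0) by (simpl; f_equal; ring).
    apply is_lim_seq_scal_l, negbin_negligible; split.
    + apply Rmult_lt_0_compat; [lra | apply lt_0_INR; lia].
    + unfold a; rewrite (Rmult_comm (INR (S u))).
      apply Rmult_lt_compat_l; [lra | apply lt_INR; lia].
Qed.

(** * The binomial series *)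

Lemma negbin_pos s k : 0 < s -> 0 < negbin s k.
Proof.
  intros Hs; induction k as [|k IH]; [rewrite negbin_0; lra|].
  rewrite negbin_S; pose proof (pos_INR k).
  apply Rdiv_lt_0_compat; [apply Rmult_lt_0_compat; lra | apply lt_0_INR; lia].
Qed.

Lemma negbin_abs_le s k : Rabs (negbin s k) <= negbin (Rabs s + 1) k.
Proof.
  induction k as [|k IH]; [rewrite !negbin_0, Rabs_R1; lra|].
  rewrite !negbin_S; assert (0 < INR (S k)) by (apply lt_0_INR; lia); pose proof (pos_INR k).
  unfold Rdiv; rewrite !Rabs_mult, Rabs_inv, (Rabs_right (INR (S k))) by lra.
  apply Rmult_le_compat_r; [left; apply Rinv_0_lt_compat; lra|].
  apply Rmult_le_compat; try apply Rabs_pos; [exact IH|].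
  pose proof (Rabs_triang (INR k) s); rewrite (Rabs_right (INR k)) in * by lra.
  pose proof (Rabs_pos s); lra.
Qed.

Lemma CV_radius_le_abs (a b : nat -> R) :
  (forall n, Rabs (a n) <= Rabs (b n)) -> Rbar_le (CV_radius b) (CV_radius a).
Proof.
  intros H; destruct (CV_radius_bounded a) as [Hub_a _], (CV_radius_bounded b) as [_ Hlub_b].
  apply Hlub_b; intros r [M HM]; apply Hub_a; exists M; intros n.
  eapply Rle_trans, (HM n); rewrite !Rabs_mult; apply Rmult_le_compat_r; [apply Rabs_pos | apply H].
Qed.

Lemma CV_radius_negbin_pos s : 0 < s -> CV_radius (negbin s) = 1.
Proof.
  intros Hs; replace (Finite 1) with (Finite (/ 1)) by (f_equal; field).
  apply CV_radius_finite_DAlembert; [intros n; apply Rgt_not_eq, negbin_pos; exact Hs | lra|].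
  apply is_lim_seq_ext with (fun n => (INR n + s) / (INR n + 1)).
  { intros n; rewrite negbin_S, S_INR; pose proof (negbin_pos s n Hs); pose proof (pos_INR n).
    rewrite Rabs_right; [field; lra|].
    apply Rle_ge; unfold Rdiv; apply Rmult_le_pos; [|left; apply Rinv_0_lt_compat; lra].
    unfold Rdiv; apply Rmult_le_pos; [|left; apply Rinv_0_lt_compat; lra]; nra. }
  apply is_lim_seq_INR_ratio; lra.
Qed.

Lemma CV_radius_negbin s : Rbar_le 1 (CV_radius (negbin s)).
Proof.
  pose proof (Rabs_pos s).
  rewrite <- (CV_radius_negbin_pos (Rabs s + 1)) by lra.
  apply CV_radius_le_abs; intros n.
  rewrite (Rabs_right (negbin (Rabs s + 1) n)) by (left; apply negbin_pos; lra).
  apply negbin_abs_le.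
Qed.

Lemma negbin_in_disk s y : Rabs y < 1 -> Rbar_lt (Rabs y) (CV_radius (negbin s)).
Proof. intros H; eapply Rbar_lt_le_trans, CV_radius_negbin; exact H. Qed.

Lemma PSeries_negbin_ode s y : Rabs y < 1 ->
  (1 - y) * PSeries (PS_derive (negbin s)) y = s * PSeries (negbin s) y.
Proof.
  intros Hy; pose proof (negbin_in_disk s y Hy) as Hin.
  pose proof (PSeries_correct _ _ (ex_pseries_derive _ _ Hin)) as HD.
  set (D := PSeries (PS_derive (negbin s)) y) in *.
  pose proof (is_pseries_minus _ _ _ _ _ HD (is_pseries_incr_1 _ _ _ HD)) as Hdiff.
  pose proof (is_pseries_scal s _ _ _ (Rmult_comm _ _)
                (PSeries_correct _ _ (CV_radius_inside _ _ Hin))) as Hscal.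
  apply is_pseries_unique in Hscal.
  assert (E : PSeries (PS_scal s (negbin s)) y = plus D (opp (scal y D))).
  { apply is_pseries_unique; eapply is_pseries_ext; [|exact Hdiff].
    intros n; unfold PS_minus, PS_scal, PS_incr_1, PS_derive.
    rewrite negbin_S, S_INR; destruct n as [|n].
    - rewrite negbin_0; unfold plus, opp, scal, zero; simpl.
      unfold mult, plus, opp, zero; simpl; field.
    - pose proof (pos_INR (S n)); set (m := INR (S n)) in *.
      unfold plus, opp, scal; simpl; unfold mult, plus, opp; simpl; field; lra. }
  rewrite Hscal in E; revert E; unfold scal, plus, opp; simpl; unfold mult, plus, opp; simpl.
  intros E; lra.
Qed.

(* By [PSeries_negbin_ode], [PSeries (negbin s) t * (1 - t)^s] has zero
   derivative on (-1, 1). *)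
Lemma PSeries_negbin s z : 0 <= z < 1 -> PSeries (negbin s) z = Rpower (1 - z) (- s).
Proof.
  intros Hz; set (h := fun t => PSeries (negbin s) t * exp (s * ln (1 - t))).
  assert (Hflat : forall t, -1 < t < 1 -> is_derive h t 0).
  { intros t Ht; assert (Hta : Rabs t < 1) by (apply Rabs_def1; lra).
    assert (Hexp : is_derive (fun t => exp (s * ln (1 - t))) t
                             (exp (s * ln (1 - t)) * (- s / (1 - t)))).
    { auto_derive; [lra|]; replace (1 + - t) with (1 - t) by ring; field; lra. }
    pose proof (is_derive_mult _ _ _ _ _ (is_derive_PSeries _ _ (negbin_in_disk s t Hta))
                  Hexp) as H.
    pose proof (PSeries_negbin_ode s t Hta) as Hode.
    set (D := PSeries (PS_derive (negbin s)) t) in *; set (G := PSeries (negbin s) t) in *.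
    set (E := exp (s * ln (1 - t))) in *.
    replace 0 with (D * E + G * (E * (- s / (1 - t)))); [exact H|].
    replace (D * E + G * (E * (- s / (1 - t)))) with (E / (1 - t) * ((1 - t) * D - s * G))
      by (field; lra).
    rewrite Hode; ring. }
  assert (Hconst : h 0 = h z).
  { destruct (Req_dec z 0) as [->|Hz0]; [reflexivity|].
    apply eq_is_derive; [intros t Ht; apply Hflat; lra | lra]. }
  unfold h in Hconst.
  rewrite PSeries_0, negbin_0, Rminus_0_r, ln_1, Rmult_0_r, exp_0, Rmult_1_l in Hconst.
  unfold Rpower; apply (Rmult_eq_reg_r (exp (s * ln (1 - z)))); [|apply Rgt_not_eq, exp_pos].
  rewrite <- Hconst, <- exp_plus; replace (- s * ln (1 - z) + s * ln (1 - z)) with 0 by ring.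
  rewrite exp_0; ring.
Qed.

Lemma is_series_negbin s z : 0 <= z < 1 ->
  is_series (fun k => negbin s k * z ^ k) (Rpower (1 - z) (- s)).
Proof.
  intros Hz; rewrite <- PSeries_negbin by exact Hz.
  assert (Hza : Rabs z < 1) by (apply Rabs_def1; lra).
  eapply is_series_ext;
    [|exact (PSeries_correct _ _ (CV_radius_inside _ _ (negbin_in_disk s z Hza)))].
  intros n; simpl; rewrite pow_n_pow; unfold scal; simpl; unfold mult; simpl; ring.
Qed.

(** * The probability generating function *)

Lemma sum_f_R0_le_mono (f : nat -> R) M N :
  (forall i, 0 <= f i) -> (M <= N)%nat -> sum_f_R0 f M <= sum_f_R0 f N.
Proof.
  intros H HMN; induction HMN as [|N _ IH]; [lra|].
  rewrite tech5; specialize (H (S N)); lra.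
Qed.

Lemma sum_f_R0_triangle_swap (x : nat -> nat -> R) N :
  (forall m k, (k < m)%nat -> x m k = 0) ->
  sum_f_R0 (fun k => sum_f_R0 (fun m => x m k) k) N
  = sum_f_R0 (fun m => sum_f_R0 (fun k => x m k) N) N.
Proof.
  intros Hz; induction N as [|N IH]; [reflexivity|].
  rewrite tech5, IH, (tech5 (fun m => sum_f_R0 (fun k => x m k) (S N))).
  rewrite (sum_eq (fun m => sum_f_R0 (fun k => x m k) (S N))
                  (fun m => sum_f_R0 (fun k => x m k) N + x m (S N))) by (intros; apply tech5).
  rewrite plus_sum, (tech5 (fun m => x m (S N))), (tech5 (fun k => x (S N) k)).
  rewrite (sum_eq (fun k => x (S N) k) (fun _ => 0)) by (intros; apply Hz; lia).
  rewrite sum_cte; ring.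
Qed.

(* Tonelli's theorem for a nonnegative upper-triangular array. *)
Lemma infinite_sum_columns (x : nat -> nat -> R) (H : nat -> R) T :
  (forall m k, 0 <= x m k) -> (forall m k, (k < m)%nat -> x m k = 0) ->
  (forall m, infinite_sum (x m) (H m)) -> infinite_sum H T ->
  infinite_sum (fun k => sum_f_R0 (fun m => x m k) k) T.
Proof.
  intros Hpos Hz Hrow HT.
  assert (HH : forall m, 0 <= H m).
  { intros m; apply Rle_trans with (x m 0%nat);
      [apply Hpos | apply (sum_incr (x m) 0 (H m) (Hrow m) (Hpos m))]. }
  intros eps Heps.
  destruct (HT (eps / 2) ltac:(lra)) as [M HM]; specialize (HM M (Nat.le_refl M)).
  assert (Hcv : Un_cv (fun n => sum_f_R0 (fun m => sum_f_R0 (x m) n) M) (sum_f_R0 H M)).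
  { apply is_lim_seq_Reals, (is_lim_seq_sum_f_R0 (fun m n => sum_f_R0 (x m) n)).
    intros m _; apply is_lim_seq_Reals, Hrow. }
  destruct (Hcv (eps / 2) ltac:(lra)) as [N HN].
  exists (Nat.max N M); intros n Hn; specialize (HN n ltac:(lia)).
  rewrite sum_f_R0_triangle_swap by exact Hz.
  change (sum_f_R0 (fun m => sum_f_R0 (fun k => x m k) n) n)
    with (sum_f_R0 (fun m => sum_f_R0 (x m) n) n).
  assert (Hup : sum_f_R0 (fun m => sum_f_R0 (x m) n) n <= T).
  { eapply Rle_trans; [|apply (sum_incr H n T HT HH)].
    apply sum_Rle; intros m _; apply (sum_incr (x m) n (H m) (Hrow m) (Hpos m)). }
  assert (Hlow : sum_f_R0 (fun m => sum_f_R0 (x m) n) M <= sum_f_R0 (fun m => sum_f_R0 (x m) n) n).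
  { apply sum_f_R0_le_mono; [intros i; apply cond_pos_sum, Hpos | lia]. }
  unfold R_dist, Rdist in *; apply Rabs_def2 in HM; apply Rabs_def2 in HN; apply Rabs_def1; lra.
Qed.

Lemma is_series_scal_R (c : R) (a : nat -> R) l :
  is_series a l -> is_series (fun n => c * a n) (c * l).
Proof. exact (is_series_scal c a l). Qed.

Lemma is_series_sum_f_R0 (F : nat -> nat -> R) (L : nat -> R) N :
  (forall i, is_series (F i) (L i)) ->
  is_series (fun k => sum_f_R0 (fun i => F i k) N) (sum_f_R0 L N).
Proof.
  intros H; induction N as [|N IH]; [apply H|].
  exact (is_series_plus _ _ _ _ IH (H (S N))).
Qed.

Lemma is_series_prob_deg p m z : 0 < p <= 1 -> 0 <= z < 1 ->
  is_series (fun k => prob_deg p (S k) (S m) * z ^ k)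
            (Rpower (1 - z) (p - 1) * (1 - Rpower (1 - z) p) ^ m).
Proof.
  intros Hp Hz; set (W := Rpower (1 - z) p).
  set (sg := fun i => (-1) ^ m * (-1) ^ (m - i)).
  apply is_series_ext with
    (fun k => sum_f_R0 (fun i => C m i * sg i * (negbin (1 + - p * INR (S i)) k * z ^ k)) m).
  { intros k; rewrite prob_deg_formula by lra; unfold alt_binom_sum, sg.
    rewrite scal_sum, Rmult_comm, scal_sum; apply sum_eq; intros i _; ring. }
  replace (Rpower (1 - z) (p - 1) * (1 - W) ^ m)
    with (sum_f_R0 (fun i => C m i * sg i * Rpower (1 - z) (- (1 + - p * INR (S i)))) m).
  { apply is_series_sum_f_R0; intros i.
    apply is_series_scal_R, is_series_negbin; exact Hz. }
  replace ((1 - W) ^ m) with ((-1) ^ m * (W + -1) ^ m)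
    by (rewrite <- Rpow_mult_distr; f_equal; ring).
  rewrite binomial, <- Rmult_assoc, (Rmult_comm _ ((-1) ^ m)), Rmult_assoc, !scal_sum.
  apply sum_eq; intros i _; unfold sg.
  replace (- (1 + - p * INR (S i))) with ((p - 1) + p * INR i) by (rewrite S_INR; ring).
  rewrite Rpower_plus, <- Rpower_mult, Rpower_pow by apply exp_pos; fold W.
  ring.
Qed.

Lemma is_series_pgf_columns p v z : 0 < p <= 1 -> 0 <= z < 1 -> 0 <= v <= 1 ->
  is_series (fun m => v ^ S m * (Rpower (1 - z) (p - 1) * (1 - Rpower (1 - z) p) ^ m))
            (v / (v * (1 - z) + (1 - v) * Rpower (1 - z) (1 - p))).
Proof.
  intros Hp Hz Hv.
  set (W := Rpower (1 - z) p); set (Q := Rpower (1 - z) (1 - p)).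
  assert (HW : 0 < W) by apply exp_pos; assert (HQ : 0 < Q) by apply exp_pos.
  assert (HW1 : W <= 1).
  { unfold W, Rpower; apply Rle_trans with (exp 0); [apply exp_le_mono | rewrite exp_0; lra].
    assert (ln (1 - z) <= 0) by (rewrite <- ln_1; apply ln_le; lra); nra. }
  assert (HWQ : W * Q = 1 - z).
  { unfold W, Q; rewrite <- Rpower_plus; replace (p + (1 - p)) with 1 by ring.
    apply Rpower_1; lra. }
  assert (HQinv : Rpower (1 - z) (p - 1) = / Q).
  { unfold Q; rewrite <- Rpower_Ropp; f_equal; ring. }
  apply is_series_ext with (fun m => v * Rpower (1 - z) (p - 1) * (v * (1 - W)) ^ m).
  { intros m; rewrite Rpow_mult_distr; simpl; ring. }
  replace (v / (v * (1 - z) + (1 - v) * Q))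
    with (v * Rpower (1 - z) (p - 1) * / (1 - v * (1 - W))).
  - apply is_series_scal_R, is_series_geom.
    rewrite Rabs_right; nra.
  - rewrite HQinv, <- HWQ.
    replace (v * (W * Q) + (1 - v) * Q) with (Q * (1 - v * (1 - W))) by ring.
    field; split; nra.
Qed.

Lemma pgf_prob_deg p z v : 0 < p <= 1 -> 0 <= z < 1 -> 0 <= v <= 1 ->
  infinite_sum
    (fun k => sum_f_R0 (fun m => prob_deg p (S k) m * v ^ m) (S k) * z ^ k)
    (v / (v * (1 - z) + (1 - v) * Rpower (1 - z) (1 - p))).
Proof.
  intros Hp Hz Hv.
  set (x := fun m k => prob_deg p (S k) (S m) * v ^ S m * z ^ k).
  apply is_series_Reals, is_series_ext with (fun k => sum_f_R0 (fun m => x m k) k).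
  { intros k; symmetry; rewrite decomp_sum by lia; simpl pred.
    rewrite prob_deg_0, Rmult_0_l, Rplus_0_l, Rmult_comm, scal_sum by (lra || lia).
    apply sum_eq; intros m _; unfold x; ring. }
  apply is_series_Reals, (infinite_sum_columns x
    (fun m => v ^ S m * (Rpower (1 - z) (p - 1) * (1 - Rpower (1 - z) p) ^ m))).
  - intros m k; unfold x; apply Rmult_le_pos; [apply Rmult_le_pos|]; try apply pow_le; try lra.
    apply prob_deg_nonneg; lra || lia.
  - intros m k Hkm; unfold x; rewrite prob_deg_gt by (lra || lia); ring.
  - intros m; apply is_series_Reals.
    apply is_series_ext with (fun k => v ^ S m * (prob_deg p (S k) (S m) * z ^ k)).
    { intros k; unfold x; simpl; ring. }
    apply is_series_scal_R, is_series_prob_deg; assumption.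
  - apply is_series_Reals, is_series_pgf_columns; assumption.
Qed.

Theorem mainTheorem2 (p : R) (hp : 0 < p < 1) :
  (forall r n : nat, (1 <= r)%nat -> (1 <= n)%nat ->
     expect p n (fun d => falling (INR d) r) =
     INR (fact r) *
       sum_f_R0 (fun j => C (r - 1) j * (-1) ^ (r - 1 - j) *
                          binomR (INR n + p * INR (S j) - 1) (n - 1)) (r - 1))
  /\
  (forall r : nat, (1 <= r)%nat ->
     exists g : R, is_Gamma (INR r * p + 1) g /\
       Un_cv (fun n => expect p n (fun d => falling (INR d) r) /
                       (INR (fact r) * Rpower (INR n) (INR r * p) / g)) 1)
  /\
  (forall z v : R, 0 <= z < 1 -> 0 <= v <= 1 ->
     infinite_sum
       (fun k => sum_f_R0 (fun m => prob_deg p (S k) m * v ^ m) (S k) * z ^ k)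
       (v / (v * (1 - z) + (1 - v) * Rpower (1 - z) (1 - p)))).
Proof.
  assert (Hp : 0 <= p <= 1) by lra.
  split; [|split].
  - intros r n Hr Hn; destruct r as [|u]; [lia|]; destruct n as [|k]; [lia|].
    replace (S u - 1)%nat with u by lia.
    rewrite (sum_eq _ (fun j => C u j * (-1) ^ (u - j) * negbin (1 + p * INR (S j)) k))
      by (intros j _; rewrite binomR_negbin; reflexivity).
    exact (factorial_moment_formula p k u Hp).
  - intros r Hr; destruct r as [|u]; [lia|].
    assert (Hrp : 0 < INR (S u) * p) by (apply Rmult_lt_0_compat; [apply lt_0_INR; lia | lra]).
    destruct (is_Gamma_exists (INR (S u) * p + 1) ltac:(lra)) as [g [Hg HG]].
    exists g; split; [exact HG|].
    apply is_lim_seq_Reals, is_lim_seq_incr_1, factorial_moment_asymptotic;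
      [lra | exact Hg | exact HG].
  - intros z v Hz Hv; apply pgf_prob_deg; [lra | exact Hz | exact Hv].
Qed.
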